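(* Let $\ket{\psi}$ be an $n$-qubit pure state and let $\mathbf{z}_1,\dots,\mathbf{z}_k\in\{0,1\}^n$ be linearly independent over $\mathrm{GF}(2)$ with $p_\psi(\mathbf{z}_j)>0$ for all $j$. Consider the $2^{n-1}$ unordered bipartitions $\{A,[n]\setminus A\}$, $A\subseteq[n]$. Then (i) if $\emptyset\neq A\subsetneq[n]$ and $\ket{\psi}=\ket{\psi_A}\otimes\ket{\psi_{[n]\setminus A}}$ for pure states on $A$ and $[n]\setminus A$, then $|\{i\in A: (\mathbf{z}_j)_i=1\}|$ is even for every $j$; and (ii) the number of unordered bipartitions $\{A,[n]\setminus A\}$ such that $|\{i\in A:(\mathbf{z}_j)_i=1\}|$ is even for all $j=1,\dots,k$ is exactly $2^{n-1-k}$. In particular, a single observed bitstring $\mathbf{z}\neq\mathbf{0}$ rules out $\ket{\psi}$ being a product across half of all bipartitions.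
   Context: Parallelized controlled-SWAP test: for an $n$-qubit state $\ket{\psi}$, with $\mathbb{F}^{(i)}$ the swap of the $i$-th qubits of two copies of $\ket{\psi}$, the probability of outcome $\mathbf{z}\in\{0,1\}^n$ is $p_\psi(\mathbf{z})=\mathrm{Tr}\big[\big(\bigotimes_{i=1}^n\tfrac12(\mathbb{1}+(-1)^{z_i}\mathbb{F}^{(i)})\big)(\ket{\psi}\!\bra{\psi})^{\otimes 2}\big]$. A bitstring is ''measured'' if it has positive probability. *)

From HB Require Import structures.
From mathcomp Require Import all_boot all_order all_algebra.
Set Implicit Arguments. Unset Strict Implicit. Unset Printing Implicit Defensive.
Import Order.TTheory GRing.Theory Num.Theory.
Local Open Scope ring_scope.

(* computational basis labels of n qubits: bitstrings in {0,1}^n *)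
Definition bits (n : nat) := {ffun 'I_n -> bool}.

Definition supp n (z : bits n) : {set 'I_n} := [set i | z i].

Definition F2vec n (z : bits n) : 'rV['F_2]_n := \row_i ((z i)%:R : 'F_2).

Definition F2mat n k (z : 'I_k -> bits n) : 'M['F_2]_(k, n) :=
  \matrix_(j < k, i < n) ((z j i)%:R : 'F_2).

Section Quantum.
Variable C : numClosedFieldType.

(* pure state: unit vector of C^(2^n), indexed by the computational basis *)
Definition pure_state n (psi : bits n -> C) : Prop :=
  \sum_x psi x * (psi x)^* = 1.

(* single-qubit-pair operator (1/2)(1 + (-1)^b F) on C^2 (x) C^2,
   matrix entry <u| . |v> with u, v : bool * bool *)
Definition swap_proj (b : bool) (u v : bool * bool) : C :=
  2^-1 * (((u == v) : nat)%:R
          + (-1) ^+ b * (((u.1 == v.2) && (u.2 == v.1)) : nat)%:R).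

(* Pi_z = tensor_i (1/2)(1 + (-1)^{z_i} F^(i)) on two copies;
   basis states of two copies are pairs (x, y) of bitstrings *)
Definition Pz n (z : bits n) (u v : bits n * bits n) : C :=
  \prod_(i < n) swap_proj (z i) (u.1 i, u.2 i) (v.1 i, v.2 i).

Definition rho2 n (psi : bits n -> C) (u v : bits n * bits n) : C :=
  (psi u.1 * (psi v.1)^*) * (psi u.2 * (psi v.2)^*).

(* p_psi(z) = Tr[ Pi_z (|psi><psi|)^{(x)2} ] *)
Definition pswap n (psi : bits n -> C) (z : bits n) : C :=
  \sum_(u : bits n * bits n) \sum_(v : bits n * bits n) Pz z u v * rho2 psi v u.

(* psi = psi_A (x) psi_{[n]\A}: the amplitude factors into a function of the
   bits in A times a function of the bits outside A *)
Definition product_across n (A : {set 'I_n}) (psi : bits n -> C) : Prop :=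
  exists (f g : bits n -> C),
    [/\ forall x y : bits n, (forall i, i \in A -> x i = y i) -> f x = f y,
        forall x y : bits n, (forall i, i \notin A -> x i = y i) -> g x = g y
      & forall x, psi x = f x * g x].

End Quantum.

Definition bipart n (A : {set 'I_n}) : {set {set 'I_n}} := [set A; ~: A].

From HB Require Import structures.
From mathcomp Require Import all_boot all_order all_algebra.
From mathcomp Require Import mxabelem ring.
Import Order.TTheory GRing.Theory Num.Theory.
Set Implicit Arguments.
Unset Strict Implicit.
Unset Printing Implicit Defensive.
Local Open Scope ring_scope.

(* Exchanging the qubits in A between the two copies leaves the product state
   (|psi><psi|)^{(x)2} invariant when psi is a product across A, while it
   multiplies the projector Pi_z by (-1)^{|A /\ supp z|}, since
   (1/2)(1 + (-1)^b F) is the (-1)^b-eigenprojector of the swap F.  Hence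
   p_psi(z) > 0 forces |A /\ supp z| to be even.  Over GF(2) the sets A with all |A /\ supp z_j|
   even form the kernel of the k x n matrix of the z_j, of size 2^(n-k); taking
   A = [n] shows that every z_j has even weight, so this family is closed under
   complement and contains exactly two sets of each bipartition. *)

Section SwapSymmetry.
Variable C : numClosedFieldType.

Lemma swap_proj_swapr (b : bool) (u v : bool * bool) :
  swap_proj C b u (v.2, v.1) = (-1) ^+ b * swap_proj C b u v.
Proof.
case: u v => [a1 a2] [c1 c2].
by case: b; case: a1; case: a2; case: c1; case: c2;
  rewrite /swap_proj /= ?expr1 ?expr0; ring.
Qed.

Variable n : nat.
Implicit Types (A : {set 'I_n}) (psi : bits n -> C) (z : bits n).

Definition swap_on A (u : bits n * bits n) : bits n * bits n :=
  ([ffun i => if i \in A then u.2 i else u.1 i],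
   [ffun i => if i \in A then u.1 i else u.2 i]).

Lemma swap_onK A : involutive (swap_on A).
Proof.
by move=> [x y]; congr pair; apply/ffunP => i; rewrite !ffunE; case: (i \in A).
Qed.

Lemma Pz_swap_on A z u v :
  Pz C z u (swap_on A v) = (-1) ^+ #|A :&: supp z| * Pz C z u v.
Proof.
rewrite /Pz -prodr_const (big_mkcond (fun i => i \in _)) -big_split /=.
apply: eq_bigr => i _; rewrite !ffunE in_setI /supp inE.
case: (i \in A) => /=; last by rewrite mul1r.
rewrite (swap_proj_swapr (z i) (u.1 i, u.2 i) (v.1 i, v.2 i)).
by case: (z i).
Qed.

Lemma rho2_swap_on A psi u v :
  product_across A psi -> rho2 psi (swap_on A v) u = rho2 psi v u.
Proof.
case=> f [g [f_A g_notA psi_fg]].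
have f_swap1 : f (swap_on A v).1 = f v.2.
  by apply: f_A => i iA; rewrite ffunE iA.
have f_swap2 : f (swap_on A v).2 = f v.1.
  by apply: f_A => i iA; rewrite ffunE iA.
have g_swap1 : g (swap_on A v).1 = g v.1.
  by apply: g_notA => i iNA; rewrite ffunE (negbTE iNA).
have g_swap2 : g (swap_on A v).2 = g v.2.
  by apply: g_notA => i iNA; rewrite ffunE (negbTE iNA).
have psi_swap : psi (swap_on A v).1 * psi (swap_on A v).2 = psi v.1 * psi v.2.
  by rewrite !psi_fg f_swap1 f_swap2 g_swap1 g_swap2; ring.
by rewrite /rho2 [LHS]mulrACA [RHS]mulrACA psi_swap.
Qed.

Lemma pswap_sign A psi z :
  product_across A psi -> pswap psi z = (-1) ^+ #|A :&: supp z| * pswap psi z.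
Proof.
move=> psiA; rewrite /pswap mulr_sumr; apply: eq_bigr => u _.
rewrite mulr_sumr (reindex_inj (inv_inj (swap_onK A))) /=.
by apply: eq_bigr => v _; rewrite Pz_swap_on rho2_swap_on // -mulrA.
Qed.

Lemma pswap_gt0_even A psi z :
  product_across A psi -> 0 < pswap psi z -> ~~ odd #|A :&: supp z|.
Proof.
move=> psiA p_gt0; apply/negP => odd_Az.
have := pswap_sign z psiA; rewrite -signr_odd odd_Az mulN1r => /eqP.
by rewrite -addr_eq0 -mulr2n mulrn_eq0 /= => /eqP p0; rewrite p0 ltxx in p_gt0.
Qed.

Lemma product_across_setT psi : product_across setT psi.
Proof.
exists psi, (fun _ => 1); split=> [x y xy | // | x]; last by rewrite mulr1.
by congr psi; apply/ffunP => i; rewrite xy ?in_setT.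
Qed.

End SwapSymmetry.

Lemma card_lker (F : finFieldType) m n (B : 'M[F]_(m, n)) :
  #|[set v : 'rV_m | v *m B == 0]| = (#|F| ^ (m - \rank B))%N.
Proof.
rewrite -mxrank_ker -card_rowg.
by apply: eq_card => v; rewrite inE mem_rowg sub_kermx.
Qed.

Lemma F2_natr_eq0 m : ((m%:R : 'F_2) == 0) = ~~ odd m.
Proof. by rewrite -(dvdn_pcharf (pchar_Fp (isT : prime 2))) dvdn2. Qed.

Lemma odd_card_setCI (T : finType) (A B : {set T}) :
  odd #|~: A :&: B| = odd #|B| (+) odd #|A :&: B|.
Proof.
by rewrite -(cardsID A B) setDE oddD [B :&: A]setIC [B :&: ~: A]setIC addbC addKb.
Qed.

Section ParitySets.
Variables n k : nat.
Implicit Types A : {set 'I_n}.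

Definition charvec A : 'rV['F_2]_n := \row_i (i \in A)%:R.

Definition rv_supp (v : 'rV['F_2]_n) : {set 'I_n} := [set i | v 0 i != 0].

Lemma charvecK : cancel charvec rv_supp.
Proof. by move=> A; apply/setP => i; rewrite inE mxE; case: (i \in A). Qed.

Lemma rv_suppK : cancel rv_supp charvec.
Proof.
move=> v; apply/rowP => i; rewrite mxE inE.
by case: (v 0 i) => -[|[|m]] //= lt_m2; apply/val_inj.
Qed.

Lemma charvec_mul_F2mat (z : 'I_k -> bits n) A j :
  (charvec A *m (F2mat z)^T) 0 j = #|A :&: supp (z j)|%:R.
Proof.
rewrite mxE -sum1_card natr_sum [RHS]big_mkcond /=.
apply: eq_bigr => i _; rewrite !mxE in_setI /supp inE.
by case: (i \in A); case: (z j i); rewrite /= ?mul1r ?mul0r.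
Qed.

Lemma charvec_ker (z : 'I_k -> bits n) A :
  (charvec A *m (F2mat z)^T == 0) = [forall j, ~~ odd #|A :&: supp (z j)|].
Proof.
apply/eqP/forallP => [A_ker j | A_even].
  by rewrite -F2_natr_eq0 -charvec_mul_F2mat A_ker mxE.
by apply/rowP => j; rewrite charvec_mul_F2mat mxE; apply/eqP; rewrite F2_natr_eq0.
Qed.

Lemma card_parity_sets (z : 'I_k -> bits n) :
  row_free (F2mat z) ->
  #|[set A | [forall j, ~~ odd #|A :&: supp (z j)|]]| = (2 ^ (n - k))%N.
Proof.
move=> /eqP z_rank.
rewrite -(card_imset _ (can_inj charvecK)) (can2_imset_pre _ charvecK rv_suppK).
rewrite -[in RHS](card_Fp (isT : prime 2)) -[in RHS]z_rank -mxrank_tr -card_lker.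
by apply: eq_card => v; rewrite !inE -charvec_ker rv_suppK.
Qed.

End ParitySets.

Section Bipartitions.
Variable n : nat.
Implicit Types A X : {set 'I_n}.

Lemma bipartC A : bipart (~: A) = bipart A.
Proof. by apply/setP => X; rewrite !inE setCK orbC. Qed.

Lemma eq_bipart A X : (bipart A == bipart X) = (A \in bipart X).
Proof.
apply/eqP/idP => [<- | ]; first by rewrite !inE eqxx.
by rewrite !inE => /orP[] /eqP ->; rewrite ?bipartC.
Qed.

Lemma card_bipart (i0 : 'I_n) A : #|bipart A| = 2%N.
Proof.
rewrite cards2; case: eqP => // /setP/(_ i0).
by rewrite inE; case: (i0 \in A).
Qed.

Lemma card_setC_closed (i0 : 'I_n) (S : {set {set 'I_n}}) :
  {in S, forall A, ~: A \in S} -> #|S| = (2 * #|[set bipart A | A in S]|)%N.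
Proof.
move=> S_setC; rewrite -sum1_card (partition_big_imset (@bipart n)) /=.
rewrite mulnC -sum_nat_const; apply: eq_bigr => _ /imsetP[X XS ->].
rewrite sum1dep_card -(card_bipart i0 X); apply: eq_card => A.
rewrite inE eq_bipart andb_idl // !inE => /orP[] /eqP -> //.
exact: S_setC.
Qed.

End Bipartitions.

Lemma half_expn2 x m : (2 * x = 2 ^ m)%N -> x = (2 ^ m.-1)%N.
Proof.
case: m => [/(congr1 odd)| m]; first by rewrite oddM.
by rewrite expnS => /eqP; rewrite eqn_pmul2l // => /eqP.
Qed.

Theorem corollary1 (C : numClosedFieldType) (n k : nat)
  (psi : bits n -> C) (z : 'I_k -> bits n) :
  pure_state psi ->
  row_free (F2mat z) ->
  (forall j, 0 < pswap psi (z j)) ->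
  (forall A : {set 'I_n}, A != set0 -> A != setT -> product_across A psi ->
     forall j, ~~ odd #|A :&: supp (z j)|)
  /\
  #|[set bipart A | A in [set A : {set 'I_n} |
                           [forall j, ~~ odd #|A :&: supp (z j)|]]]|
    = (2 ^ (n - 1 - k))%N.
Proof.
move=> _ z_free p_gt0; split=> [A _ _ psiA j|].
  exact: pswap_gt0_even psiA (p_gt0 j).
set S := [set A | _].
have cardS : #|S| = (2 ^ (n - k))%N := card_parity_sets z_free.
have even_z j : ~~ odd #|supp (z j)|.
  by rewrite -[supp _]setTI; apply: pswap_gt0_even (product_across_setT _) _.
have S_setC : {in S, forall A, ~: A \in S}.
  move=> A; rewrite !inE => /forallP A_even; apply/forallP => j.
  by rewrite odd_card_setCI (negbTE (even_z j)) (negbTE (A_even j)).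
have [n0 | n_gt0] := posnP n.
  rewrite card_in_imset => [|A B _ _ _]; first by rewrite cardS n0.
  by apply/setP => i; have := ltn_ord i; rewrite {2}n0.
have := card_setC_closed (Ordinal n_gt0) S_setC.
by rewrite cardS subnAC subn1 => /esym /half_expn2.
Qed.
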